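(* Let $n\ge1$, $e=i_n$, and $x=(\bar x,x_n),\,y=(\bar y,y_n)\in Q_n$ with $\bar x,\bar y\in Q_{n-1}$, $x_n,y_n\in\{0,1\}$. Then for every $z\in Q_{n-1}$ (viewed in $Q_n$) we have $[y,x,ze]=[\bar x,\bar y]\,[y,x,z]$; equivalently, if $L_{x,y}(z)=\varepsilon z$ with $\varepsilon\in\{\pm1\}$, then $L_{x,y}(ze)=[\bar x,\bar y]\,\varepsilon\, ze$. Moreover $L_{x,e}=L_{xe,e}$ for all $x\in Q_n$.
   Context: Cayley--Dickson loops: $Q_0=\{1,-1\}\subset\mathbb{R}$ with conjugation $x^*=x$. For $n\ge1$, $Q_n=\{(x,0),(x,1)\mid x\in Q_{n-1}\}$ with multiplication $(x,0)(y,0)=(xy,0)$, $(x,0)(y,1)=(yx,1)$, $(x,1)(y,0)=(xy^*,1)$, $(x,1)(y,1)=(-y^*x,0)$ and conjugation $(x,0)^*=(x^*,0)$, $(x,1)^*=(-x,1)$, where $-(x,a)=(-x,a)$. $Q_n$ is a loop with neutral element $1=(1,0,\dots,0)$. $Q_{n-1}$ is identified with $\{(x,0)\}\subset Q_n$; $e=i_n=(1_{Q_{n-1}},1)$. Commutator $[x,y]$ defined by $xy=(yx)[x,y]$ and associator by $(xy)z=(x(yz))[x,y,z]$, both in $\{\pm1\}$. $L_x(a)=xa$, $L_{x,y}=L_{yx}^{-1}L_yL_x$; one has $L_{x,y}(z)=[y,x,z]z$. *)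

From Stdlib Require Import List Bool.
Import ListNotations.
Set Implicit Arguments.

(* Q_0 = {1,-1} encoded as bool (false = 1, true = -1);
   Q_{m+1} = Q_m x {0,1}, with (x,false) = (x,0) and (x,true) = (x,1). *)
Fixpoint Q (n : nat) : Type :=
  match n with 0 => bool | S m => (Q m * bool)%type end.

Fixpoint Qneg (n : nat) : Q n -> Q n :=
  match n return Q n -> Q n with
  | 0 => negb
  | S m => fun x => (Qneg m (fst x), snd x)
  end.

Fixpoint Qconj (n : nat) : Q n -> Q n :=
  match n return Q n -> Q n with
  | 0 => fun a => a
  | S m => fun x =>
      if snd x then (Qneg m (fst x), true) else (Qconj m (fst x), false)
  end.

Fixpoint Qmul (n : nat) : Q n -> Q n -> Q n :=
  match n return Q n -> Q n -> Q n with
  | 0 => xorb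
  | S m => fun x y =>
      match snd x, snd y with
      | false, false => (Qmul m (fst x) (fst y), false)
      | false, true  => (Qmul m (fst y) (fst x), true)
      | true,  false => (Qmul m (fst x) (Qconj m (fst y)), true)
      | true,  true  => (Qneg m (Qmul m (Qconj m (fst y)) (fst x)), false)
      end
  end.

Fixpoint Qone (n : nat) : Q n :=
  match n return Q n with 0 => false | S m => (Qone m, false) end.

Fixpoint Qeqb (n : nat) : Q n -> Q n -> bool :=
  match n return Q n -> Q n -> bool with
  | 0 => Bool.eqb
  | S m => fun x y => Qeqb m (fst x) (fst y) && Bool.eqb (snd x) (snd y)
  end.

Fixpoint Qenum (n : nat) : list (Q n) :=
  match n return list (Q n) with
  | 0 => [false; true]
  | S m => flat_map (fun a => [(a, false); (a, true)]) (Qenum m)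
  end.

Arguments Qneg {n}. Arguments Qconj {n}. Arguments Qmul {n}.
Arguments Qone {n}. Arguments Qeqb {n}. Arguments Qenum {n}.

(* Signs in {+1,-1} are encoded as bool (false = +1, true = -1);
   the product of two signs is xorb. *)
Definition sgnQ {n : nat} (s : bool) : Q n := if s then Qneg Qone else Qone.
Definition sgn_act {n : nat} (s : bool) (w : Q n) : Q n := if s then Qneg w else w.

(* commutator [x,y] : xy = (yx)[x,y] *)
Definition Qcomm {n : nat} (x y : Q n) : bool :=
  negb (Qeqb (Qmul x y) (Qmul (Qmul y x) (sgnQ false))).

(* associator [x,y,z] : (xy)z = (x(yz))[x,y,z] *)
Definition Qassoc {n : nat} (x y z : Q n) : bool :=
  negb (Qeqb (Qmul (Qmul x y) z) (Qmul (Qmul x (Qmul y z)) (sgnQ false))).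

(* L_a^{-1}(b): the unique w with a w = b (found by search; L_a is bijective) *)
Definition Ldiv {n : nat} (a b : Q n) : Q n :=
  match find (fun w => Qeqb (Qmul a w) b) Qenum with
  | Some w => w
  | None => b
  end.

Definition Lmul {n : nat} (x : Q n) : Q n -> Q n := fun a => Qmul x a.

Definition Lxy {n : nat} (x y : Q n) : Q n -> Q n :=
  fun z => Ldiv (Qmul y x) (Lmul y (Lmul x z)).

(* e = i_n = (1_{Q_{n-1}}, 1) in Q_n, here n = m+1 *)
Definition i_ (m : nat) : Q (S m) := (Qone, true).

Definition emb {m : nat} (z : Q m) : Q (S m) := (z, false).

From Stdlib Require Import List Bool Btauto FunctionalExtensionality.

(* Every element of Q_n is a sign times a "basis vector", and multiplying
   basis vectors adds their supports in (Z/2)^n: the map [supp] forgetting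
   the signs is a homomorphism onto the elementary abelian group (Z/2)^n
   whose kernel is {1,-1}.  Hence any two bracketings (or orderings) of a
   product agree up to a sign, which is exactly the associator (resp.
   commutator); in particular left multiplication is injective and
   L_{x,y}(w) = [y,x,w] w.
   The two statements about e = i_n are then proved by unfolding the
   Cayley--Dickson doubling formulas once:
   - for z in Q_{n-1}, both bracketings of y x (ze) have first coordinates
     which are, up to signs, the conjugates of those for y x z, but with the
     order of xb and yb swapped; this yields [y,x,ze] = [xb,yb][y,x,z];
   - [e,x,v] is unchanged when x is replaced by xe (= +-(xb, 1-x_n)), using
     also that the associator is insensitive to the sign of its middle entry.
   The main theorem follows by combining these with L_{x,y}(w) = [y,x,w] w. *)

Lemma neg_neg {n} (x : Q n) : Qneg (Qneg x) = x.
Proof. induction n; simpl. - now destruct x. - destruct x; simpl; now rewrite IHn. Qed.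

Lemma neg_neq {n} (x : Q n) : Qneg x <> x.
Proof.
  induction n; simpl. - now destruct x.
  - destruct x; simpl; intros H; injection H; apply IHn.
Qed.

Lemma conj_neg {n} (x : Q n) : Qconj (Qneg x) = Qneg (Qconj x).
Proof. induction n; simpl. - reflexivity. - destruct x as [a []]; simpl; now rewrite ?IHn. Qed.

Lemma conj_conj {n} (x : Q n) : Qconj (Qconj x) = x.
Proof.
  induction n; simpl. - reflexivity.
  - destruct x as [a []]; simpl; now rewrite ?IHn, ?neg_neg.
Qed.

Lemma mul_neg {n} :
  (forall x y : Q n, Qmul (Qneg x) y = Qneg (Qmul x y)) /\
  (forall x y : Q n, Qmul x (Qneg y) = Qneg (Qmul x y)).
Proof.
  induction n as [|n [IHl IHr]]; simpl.
  - split; intros [] []; reflexivity.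
  - split; intros [a []] [b []]; simpl;
      rewrite ?IHl, ?IHr, ?conj_neg, ?IHl, ?IHr; reflexivity.
Qed.

Lemma mul_neg_l {n} (x y : Q n) : Qmul (Qneg x) y = Qneg (Qmul x y).
Proof. apply mul_neg. Qed.

Lemma mul_neg_r {n} (x y : Q n) : Qmul x (Qneg y) = Qneg (Qmul x y).
Proof. apply mul_neg. Qed.

Lemma conj_one {n} : Qconj (@Qone n) = Qone.
Proof. induction n; simpl; now rewrite ?IHn. Qed.

Lemma mul_one_r {n} (x : Q n) : Qmul x Qone = x.
Proof.
  induction n; simpl. - now destruct x.
  - destruct x as [a []]; simpl; now rewrite ?conj_one, IHn.
Qed.

Lemma mul_one_l {n} (x : Q n) : Qmul Qone x = x.
Proof.
  induction n; simpl. - now destruct x.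
  - destruct x as [a []]; simpl; now rewrite ?mul_one_r, ?IHn.
Qed.

Lemma conj_mul {n} (x y : Q n) : Qconj (Qmul x y) = Qmul (Qconj y) (Qconj x).
Proof.
  induction n; simpl. - now destruct x, y.
  - destruct x as [a []], y as [b []]; simpl;
      rewrite ?conj_neg, ?IHn, ?conj_conj, ?mul_neg_l, ?mul_neg_r, ?neg_neg;
      reflexivity.
Qed.

(* The conjugate of an element is the element itself up to a sign
   [conj_sign x]: -1 exactly when some doubling coordinate of x is 1. *)
Fixpoint conj_sign (n : nat) : Q n -> bool :=
  match n return Q n -> bool with
  | 0 => fun _ => false
  | S m => fun x => if snd x then true else conj_sign m (fst x)
  end.
Arguments conj_sign {n}.

Lemma sgn_pair {m} s (a : Q m) b : @sgn_act (S m) s (a, b) = (sgn_act s a, b).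
Proof. now destruct s. Qed.

Lemma sgn_sgn {n} s t (u : Q n) : sgn_act s (sgn_act t u) = sgn_act (xorb s t) u.
Proof. destruct s, t; simpl; now rewrite ?neg_neg. Qed.

Lemma mul_sgn_l {n} s (u v : Q n) : Qmul (sgn_act s u) v = sgn_act s (Qmul u v).
Proof. destruct s; simpl; now rewrite ?mul_neg_l. Qed.

Lemma mul_sgn_r {n} s (u v : Q n) : Qmul u (sgn_act s v) = sgn_act s (Qmul u v).
Proof. destruct s; simpl; now rewrite ?mul_neg_r. Qed.

Lemma conj_sgn_act {n} s (u : Q n) : Qconj (sgn_act s u) = sgn_act s (Qconj u).
Proof. destruct s; simpl; now rewrite ?conj_neg. Qed.

Lemma neg_sgn_act {n} (u : Q n) : Qneg u = sgn_act true u.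
Proof. reflexivity. Qed.

Lemma sgn_act_inj {n} s t (u : Q n) : sgn_act s u = sgn_act t u -> s = t.
Proof.
  destruct s, t; simpl; auto; intros H.
  - now apply neg_neq in H.
  - symmetry in H; now apply neg_neq in H.
Qed.

Lemma sgn_act_move {n} s t (u v : Q n) :
  sgn_act s u = sgn_act t v -> u = sgn_act (xorb s t) v.
Proof. intros H. rewrite <- sgn_sgn, <- H, sgn_sgn, xorb_nilpotent. reflexivity. Qed.

Lemma sgn_act_move_back {n} s t (u v : Q n) :
  u = sgn_act (xorb s t) v -> sgn_act s u = sgn_act t v.
Proof.
  intros ->. rewrite sgn_sgn, <- xorb_assoc, xorb_nilpotent. reflexivity.
Qed.

Lemma conj_sign_neg {n} (u : Q n) : conj_sign (Qneg u) = conj_sign u.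
Proof. induction n; simpl. - reflexivity. - destruct u as [a []]; simpl; auto. Qed.

Lemma conj_sign_sgn_act {n} s (u : Q n) : conj_sign (sgn_act s u) = conj_sign u.
Proof. destruct s; simpl; auto using conj_sign_neg. Qed.

Lemma conj_as_sgn {n} (x : Q n) : Qconj x = sgn_act (conj_sign x) x.
Proof.
  induction n; simpl. - reflexivity.
  - destruct x as [a []]; simpl. + reflexivity. + rewrite sgn_pair, IHn. reflexivity.
Qed.

(* The quotient Q_n/{+1,-1} is the elementary abelian group (Z/2)^n. *)
Fixpoint Supp (n : nat) : Type :=
  match n with 0 => unit | S m => (Supp m * bool)%type end.

Fixpoint supp_add (n : nat) : Supp n -> Supp n -> Supp n :=
  match n return Supp n -> Supp n -> Supp n with
  | 0 => fun _ _ => tt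
  | S m => fun u v => (supp_add m (fst u) (fst v), xorb (snd u) (snd v))
  end.

Fixpoint supp (n : nat) : Q n -> Supp n :=
  match n return Q n -> Supp n with
  | 0 => fun _ => tt
  | S m => fun x => (supp m (fst x), snd x)
  end.

Arguments supp_add {n}. Arguments supp {n}.

Lemma supp_add_comm {n} (u v : Supp n) : supp_add u v = supp_add v u.
Proof. induction n; simpl. - reflexivity. - now rewrite IHn, xorb_comm. Qed.

Lemma supp_add_assoc {n} (u v w : Supp n) :
  supp_add (supp_add u v) w = supp_add u (supp_add v w).
Proof. induction n; simpl. - reflexivity. - now rewrite IHn, xorb_assoc. Qed.

Lemma supp_add_cancel {n} (a u v : Supp n) : supp_add a u = supp_add a v -> u = v.
Proof.
  induction n; simpl.
  - now destruct u, v.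
  - destruct a as [a a'], u as [u u'], v as [v v']; simpl; intros H.
    injection H as H1 H2. rewrite (IHn _ _ _ H1).
    destruct a', u', v'; simpl in *; congruence.
Qed.

Lemma supp_neg {n} (x : Q n) : supp (Qneg x) = supp x.
Proof. induction n; simpl. - reflexivity. - now rewrite IHn. Qed.

Lemma supp_conj {n} (x : Q n) : supp (Qconj x) = supp x.
Proof.
  induction n; simpl. - reflexivity.
  - destruct x as [a []]; simpl; now rewrite ?supp_neg, ?IHn.
Qed.

Lemma supp_mul {n} (x y : Q n) : supp (Qmul x y) = supp_add (supp x) (supp y).
Proof.
  induction n; simpl. - reflexivity.
  - destruct x as [a []], y as [b []]; simpl;
      rewrite ?supp_neg, ?IHn, ?supp_conj; try reflexivity; now rewrite supp_add_comm.
Qed.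

Lemma supp_eq {n} (u v : Q n) : supp u = supp v -> u = v \/ u = Qneg v.
Proof.
  induction n; simpl.
  - destruct u, v; auto.
  - destruct u as [a b], v as [c d]; simpl; intros H; injection H as H1 ->.
    destruct (IHn _ _ H1) as [-> | ->]; auto.
Qed.

Lemma Qeqb_eq {n} (u v : Q n) : Qeqb u v = true <-> u = v.
Proof.
  induction n; simpl. - apply eqb_true_iff.
  - destruct u as [a b], v as [c d]; simpl.
    rewrite andb_true_iff, IHn, eqb_true_iff.
    split. + intros [-> ->]; auto. + intros H; injection H; auto.
Qed.

Lemma same_supp_sgn {n} (u v : Q n) :
  supp u = supp v -> u = sgn_act (negb (Qeqb u v)) v.
Proof.
  intros H. destruct (Qeqb u v) eqn:E.
  - now apply Qeqb_eq in E.
  - destruct (supp_eq _ _ H) as [-> | ->]; [|reflexivity].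
    now rewrite (proj2 (Qeqb_eq v v) eq_refl) in E.
Qed.

Lemma assoc_eq {n} (x y z : Q n) :
  Qmul (Qmul x y) z = sgn_act (Qassoc x y z) (Qmul x (Qmul y z)).
Proof.
  unfold Qassoc, sgnQ. rewrite mul_one_r. apply same_supp_sgn.
  now rewrite !supp_mul, supp_add_assoc.
Qed.

Lemma comm_eq {n} (x y : Q n) : Qmul x y = sgn_act (Qcomm x y) (Qmul y x).
Proof.
  unfold Qcomm, sgnQ. rewrite mul_one_r. apply same_supp_sgn.
  now rewrite !supp_mul, supp_add_comm.
Qed.

Lemma assoc_unique {n} (x y z : Q n) s :
  Qmul (Qmul x y) z = sgn_act s (Qmul x (Qmul y z)) -> Qassoc x y z = s.
Proof.
  intros H. pose proof (assoc_eq x y z) as H'. rewrite H in H'.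
  apply sgn_act_inj in H'. now symmetry.
Qed.

Lemma assoc_neg_mid {n} (x y z : Q n) : Qassoc x (Qneg y) z = Qassoc x y z.
Proof.
  apply assoc_unique.
  rewrite !neg_sgn_act, mul_sgn_r, !mul_sgn_l, mul_sgn_r, assoc_eq, !sgn_sgn, xorb_comm.
  reflexivity.
Qed.

Lemma mul_inj_l {n} (a u v : Q n) : Qmul a u = Qmul a v -> u = v.
Proof.
  intros H.
  assert (Hsupp : supp u = supp v).
  { apply (supp_add_cancel (supp a)). now rewrite <- !supp_mul, H. }
  destruct (supp_eq _ _ Hsupp) as [Hu | ->]; auto.
  rewrite mul_neg_r in H. now apply neg_neq in H.
Qed.

(* [Qenum] lists every element, so the search in [Ldiv] always succeeds. *)
Lemma in_Qenum {n} (u : Q n) : In u Qenum.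
Proof.
  induction n; simpl.
  - destruct u; simpl; auto.
  - destruct u as [a b]. apply in_flat_map. exists a.
    split; auto. destruct b; simpl; auto.
Qed.

Lemma Ldiv_spec {n} (a b w : Q n) : Qmul a w = b -> Ldiv a b = w.
Proof.
  intros H. unfold Ldiv.
  destruct (find (fun w => Qeqb (Qmul a w) b) Qenum) eqn:E.
  - apply find_some in E as [_ E]. apply Qeqb_eq in E.
    apply (mul_inj_l a). congruence.
  - pose proof (find_none _ _ E w (in_Qenum w)) as F. simpl in F.
    now rewrite (proj2 (Qeqb_eq _ _) H) in F.
Qed.

Lemma Lxy_eq {n} (x y w : Q n) : Lxy x y w = sgn_act (Qassoc y x w) w.
Proof.
  unfold Lxy, Lmul. apply Ldiv_spec.
  rewrite mul_sgn_r, assoc_eq, sgn_sgn, xorb_nilpotent. reflexivity.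
Qed.

Ltac normalize :=
  repeat progress rewrite ?conj_mul, ?conj_sgn_act, ?mul_sgn_l, ?mul_sgn_r,
    ?sgn_sgn, ?conj_conj, ?conj_sign_sgn_act, ?neg_sgn_act in *.
Ltac normalize_conj := normalize; rewrite ?conj_as_sgn in *; normalize.

Section DoublingIdentities.

Variable m : nat.

(* [y, x, z e] = [xb, yb] [y, x, z] for z in Q_{n-1}; note z e = (z, 1). *)
Lemma assoc_times_e (xb yb z : Q m) xn yn :
  Qassoc ((yb, yn) : Q (S m)) (xb, xn) (z, true)
  = xorb (Qcomm xb yb) (Qassoc ((yb, yn) : Q (S m)) (xb, xn) (z, false)).
Proof.
  pose proof (assoc_eq ((yb, yn) : Q (S m)) (xb, xn) (z, false)) as Ez.
  set (A := Qassoc _ _ _) in Ez |- *. clearbody A.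
  pose proof (comm_eq xb yb) as Cxy.
  set (c := Qcomm xb yb) in Cxy |- *. clearbody c.
  apply assoc_unique.
  destruct xn, yn; simpl in Ez |- *; rewrite sgn_pair in Ez |- *;
    injection Ez as Ez; f_equal.
  (* the first coordinates for (z,1) are the conjugates of those for (z,0) *)
  all: apply (f_equal Qconj) in Ez; normalize_conj; rewrite ?Cxy in *; normalize;
    try apply sgn_act_move_back; apply sgn_act_move in Ez; rewrite Ez;
    f_equal; btauto.
Qed.

Lemma assoc_e_mid_flip (a : Q m) (v : Q (S m)) :
  Qassoc (i_ m) (a, false) v = Qassoc (i_ m) (a, true) v.
Proof.
  pose proof (assoc_eq (i_ m) (a, true) v) as Ev.
  set (A := Qassoc _ _ _) in Ev |- *. clearbody A.
  apply assoc_unique. unfold i_ in *.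
  destruct v as [c []]; simpl in Ev |- *; rewrite ?sgn_pair in Ev |- *;
    injection Ev as Ev; f_equal;
    rewrite ?mul_one_l, ?mul_one_r, ?conj_one in *; normalize_conj;
    try apply sgn_act_move_back; apply sgn_act_move in Ev; rewrite Ev;
    f_equal; btauto.
Qed.

Lemma emb_times_e (z : Q m) : Qmul (emb z) (i_ m) = (z, true).
Proof. unfold emb, i_. simpl. now rewrite mul_one_l. Qed.

(* L_{w,e} = L_{we,e}, since w e = (a,1) or -(a,0) when w = (a,0) or (a,1). *)
Lemma Lxe_times_e (w : Q (S m)) : Lxy w (i_ m) = Lxy (Qmul w (i_ m)) (i_ m).
Proof.
  apply functional_extensionality. intros v. rewrite !Lxy_eq. f_equal.
  destruct w as [a []]; unfold i_; simpl; rewrite ?conj_one, mul_one_l.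
  - change ((Qneg a, false) : Q (S m)) with (Qneg ((a, false) : Q (S m))).
    rewrite assoc_neg_mid. symmetry. apply assoc_e_mid_flip.
  - apply assoc_e_mid_flip.
Qed.

End DoublingIdentities.

Theorem mainTheorem14 :
  forall (m : nat) (xb yb : Q m) (xn yn : bool),
    let n := S m in
    let e := i_ m in
    let x : Q n := (xb, xn) in
    let y : Q n := (yb, yn) in
    (forall z : Q m,
        Qassoc y x (Qmul (emb z) e) = xorb (Qcomm xb yb) (Qassoc y x (emb z)))
    /\
    (forall (z : Q m) (eps : bool),
        Lxy x y (emb z) = sgn_act eps (emb z) ->
        Lxy x y (Qmul (emb z) e) =
          sgn_act (xorb (Qcomm xb yb) eps) (Qmul (emb z) e))
    /\
    (forall w : Q n, Lxy w e = Lxy (Qmul w e) e).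
Proof.
  intros m xb yb xn yn; cbv zeta.
  split; [| split].
  - intros z. rewrite emb_times_e. apply assoc_times_e.
  - (* L_{x,y} acts by the associator, so eps = [y,x,z] *)
    intros z eps Hz. rewrite emb_times_e, !Lxy_eq in *. unfold emb in Hz.
    apply sgn_act_inj in Hz. now rewrite assoc_times_e, Hz.
  - apply Lxe_times_e.
Qed.
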